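(* Let $\mathcal E$ satisfy Assumption (i)–(v). For $x\in\mathbb R^d$ and $r\in(0,R_0]$ define $\mathcal E_r(x)=\sup_{y\in B_r(\bar y(x))}|\mathcal E(x,y)-\mathcal E(x,\bar y(x))|$. Let $0<q\le \mathcal E_\infty/2$ and $r:=\max\{s\in(0,R_0]:\sup_{x\in\mathbb R^d}\mathcal E_s(x)\le q\}$. Let $(\overline X_t,\overline Y_t)$ solve (MF) and $\rho_t^Y$ be the law of $\overline Y_t$. Then for every $t>0$ and every $x\in\mathbb R^d$ with $\rho_t^Y(B_r(\bar y(x)))>0$, $$|\bar y(x)-Y_\beta(\rho^Y_t,x)|\le\frac{(2q)^\nu}{\eta}+\frac{\exp(-\beta q)}{\rho_t^Y(B_r(\bar y(x)))}\int|y-\bar y(x)|\,\rho^Y_t(dy).$$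
   Context: Let $\mathcal{E}:\mathbb R^d\times\mathbb R^d\to\mathbb R$ be continuous, $|\cdot|$ the Euclidean norm, and $B_r(z)=\{z':\max_k|z'_k-z_k|\le r\}$ the $\ell^\infty$ ball. Weights $\omega^{\mathcal E}_\alpha(x,y)=\exp(-\alpha\mathcal E(x,y))$. For a probability measure $\rho^Y$, $Y_\beta(\rho^Y,x)=\int y\,e^{\beta\mathcal E(x,y)}\rho^Y(dy)/\int e^{\beta\mathcal E(x,y)}\rho^Y(dy)$, and $X_{\alpha,\beta}(\rho^X)=\int x\,e^{-\alpha\mathcal E(x,Y_\beta(\rho^Y,x))}\rho^X(dx)/\int e^{-\alpha\mathcal E(x,Y_\beta(\rho^Y,x))}\rho^X(dx)$. Mean-field system (MF): with $\lambda,\sigma,\alpha,\beta>0$, $D(z)=\mathrm{diag}(z_1,\dots,z_d)$, independent Brownian motions $B^X,B^Y$: $d\overline X_t=-\lambda(\overline X_t-X_{\alpha,\beta}(\rho^X_t))dt+\sigma D(\overline X_t-X_{\alpha,\beta}(\rho^X_t))dB^X_t$, $d\overline Y_t=-\lambda(\overline Y_t-Y_\beta(\rho^Y_t,\overline X_t))dt+\sigma D(\overline Y_t-Y_\beta(\rho^Y_t,\overline X_t))dB^Y_t$, $\rho^X_t,\rho^Y_t$ the laws of $\overline X_t,\overline Y_t$; a solution with finite fourth moments on bounded time intervals is assumed to exist. Assumption: (i) $\underline C_{\mathcal E}\le\mathcal E\le\overline C_{\mathcal E}$. (ii) $|\mathcal E(x_1,y_1)-\mathcal E(x_2,y_2)|\le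 L_{\mathcal E}(1+|x_1|+|x_2|+|y_1|+|y_2|)(|x_1-x_2|+|y_1-y_2|)$. (iii) for each $x$ there is a unique $\bar y(x)=\arg\max_y\mathcal E(x,y)$; with $\overline{\mathcal E}(x)=\mathcal E(x,\bar y(x))$, $x^*=\arg\min\overline{\mathcal E}$ and $y^*=\bar y(x^* )$; $|\bar y(x_1)-\bar y(x_2)|\le\bar c_1|x_1-x_2|$ and $|\bar y(x)|\le\bar c_2$ for all $x$. (iv) there are $\mathcal E_\infty,\eta,\nu,R_0>0$ such that for all $x$: $\eta|y-\bar y(x)|\le|\mathcal E(x,y)-\mathcal E(x,\bar y(x))|^\nu$ for $y\in B_{R_0}(\bar y(x))$, and $\mathcal E_\infty<\mathcal E(x,\bar y(x))-\mathcal E(x,y)$ for $y\notin B_{R_0}(\bar y(x))$. (v) for each $q>0$ there is $r\in(0,R_0]$ with $\sup_x\sup_{y\in B_r(\bar y(x))}|\mathcal E(x,y)-\mathcal E(x,\bar y(x))|\le q$. *)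

From HB Require Import structures.
From mathcomp Require Import all_boot all_order all_algebra.
From mathcomp Require Import all_classical all_reals all_analysis.
Set Implicit Arguments. Unset Strict Implicit. Unset Printing Implicit Defensive.
Import Order.TTheory GRing.Theory Num.Theory.
Import numFieldNormedType.Exports.
Local Open Scope classical_set_scope.
Local Open Scope ring_scope.

Definition Rd (R : realType) (d : nat) :=
  g_sigma_algebraType (@open 'rV[R]_d).

Definition enorm {R : realType} {d : nat} (z : 'rV[R]_d) : R :=
  Num.sqrt (\sum_(k < d) (z ord0 k) ^+ 2).

Definition linf_ball {R : realType} {d : nat} (z : 'rV[R]_d) (r : R)
  : set 'rV[R]_d :=
  [set z' | forall k : 'I_d, `|z' ord0 k - z ord0 k| <= r].

Definition Ybeta {R : realType} {d : nat}
  (E : 'rV[R]_d -> 'rV[R]_d -> R) (beta : R)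
  (rho : probability (Rd R d) R) (x : 'rV[R]_d) : 'rV[R]_d :=
  \row_(k < d)
    (Rintegral rho setT (fun y : Rd R d => y ord0 k * expR (beta * E x y))
     / Rintegral rho setT (fun y : Rd R d => expR (beta * E x y))).

Definition Er {R : realType} {d : nat}
  (E : 'rV[R]_d -> 'rV[R]_d -> R) (ybar : 'rV[R]_d -> 'rV[R]_d)
  (r : R) (x : 'rV[R]_d) : R :=
  sup [set `|E x y - E x (ybar x)| | y in linf_ball (ybar x) r].

Definition supEr {R : realType} {d : nat}
  (E : 'rV[R]_d -> 'rV[R]_d -> R) (ybar : 'rV[R]_d -> 'rV[R]_d) (r : R) : R :=
  sup (range (Er E ybar r)).

From HB Require Import structures.
From mathcomp Require Import all_boot all_order all_algebra.
From mathcomp Require Import all_classical all_reals all_analysis.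
From mathcomp Require Import ring lra measurable_realfun.
Set Implicit Arguments. Unset Strict Implicit. Unset Printing Implicit Defensive.
Import Order.TTheory GRing.Theory Num.Theory.
Import numFieldNormedType.Exports.
Local Open Scope classical_set_scope.
Local Open Scope ring_scope.

(* Let [w = exp (beta E(x, _))], so that [Y_beta(rho, x)] is the [w]-weighted
   mean of [rho], and let [c = ybar x].  Cauchy-Schwarz gives
   [|c - Y_beta(rho, x)| * int w <= int |y - c| w].  Split the right-hand side
   at the radius [(2q)^nu / eta]: inside, [|y - c| w] is at most the radius
   times [w]; outside, the growth condition (iv) and [2q <= Einf] force
   [E(x, y) < E(x, c) - 2q], so [w <= exp (beta (E(x, c) - 2q))].  On the ball
   [B_r(c)] the choice of [r] gives [E(x, y) >= E(x, c) - q], hence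
   [int w >= exp (beta (E(x, c) - q)) rho(B_r(c))]; the two exponentials differ
   by the factor [exp (- beta q)]. *)

Section euclidean_norm.
Variables (R : realType) (d : nat).
Implicit Types a b : 'rV[R]_d.

Lemma sumr_sqr_ge0 a : 0 <= \sum_(k < d) a ord0 k ^+ 2.
Proof. by apply: sumr_ge0 => k _; exact: sqr_ge0. Qed.

Lemma enorm_ge0 a : 0 <= enorm a.
Proof. exact: sqrtr_ge0. Qed.

Lemma sqr_enorm a : enorm a ^+ 2 = \sum_(k < d) a ord0 k ^+ 2.
Proof. by rewrite sqr_sqrtr // sumr_sqr_ge0. Qed.

Lemma normr_coord_le_enorm a k : `|a ord0 k| <= enorm a.
Proof.
rewrite -(sqrtr_sqr (a ord0 k)) ler_sqrt ?sumr_sqr_ge0 // (bigD1 k) //= lerDl.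
by apply: sumr_ge0 => i _; exact: sqr_ge0.
Qed.

Lemma cauchy_schwarz a b :
  `|\sum_(k < d) a ord0 k * b ord0 k| <= enorm a * enorm b.
Proof.
set A := \sum_(k < d) a ord0 k ^+ 2; set B := \sum_(k < d) b ord0 k ^+ 2.
set C := \sum_(k < d) a ord0 k * b ord0 k.
suff CAB : C ^+ 2 <= A * B.
  by rewrite -sqrtrM ?sumr_sqr_ge0 // -(sqrtr_sqr C) ler_sqrt // mulr_ge0 // sumr_sqr_ge0.
have [A0|A0] := eqVneq A 0.
  have a0 k : a ord0 k = 0.
    apply/eqP; rewrite -sqrf_eq0; apply/eqP.
    by apply: (psumr_eq0P _ A0) => // i _; exact: sqr_ge0.
  by rewrite /C big1 ?expr0n ?A0 ?mul0r // => k _; rewrite a0 mul0r.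
have Apos : 0 < A by rewrite lt_def A0 sumr_sqr_ge0.
(* Lagrange's trick: [A (A B - C^2)] is the sum of squares of [A b - C a]. *)
have expand : \sum_(k < d) (A * b ord0 k - C * a ord0 k) ^+ 2 = A * (A * B - C ^+ 2).
  transitivity (\sum_(k < d) (A ^+ 2 * b ord0 k ^+ 2 + C ^+ 2 * a ord0 k ^+ 2
      - 2 * A * C * (a ord0 k * b ord0 k))); first by apply: eq_bigr => k _; ring.
  by rewrite sumrB big_split /= -!mulr_sumr -/A -/B -/C; ring.
rewrite -subr_ge0 -(pmulr_rge0 _ Apos) -expand.
by apply: sumr_ge0 => k _; exact: sqr_ge0.
Qed.

End euclidean_norm.

Section measurability.
Variables (R : realType) (d : nat).

Lemma continuous_measurable_rV (f : 'rV[R]_d -> R) :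
  continuous f -> measurable_fun (setT : set (Rd R d)) f.
Proof.
move=> /continuousP cf.
apply: (measurability _ (measurable_realfun.RGenOpens.measurableE R)).
move=> _ [_ [a [b ->]] <-]; rewrite setTI; apply: sub_sigma_algebra.
exact/cf/interval_open.
Qed.

Lemma measurable_coordB (c : 'rV[R]_d) k :
  measurable_fun (setT : set (Rd R d)) (fun y : 'rV[R]_d => (y - c) ord0 k).
Proof.
have -> : (fun y : 'rV[R]_d => (y - c) ord0 k) = (fun y => y ord0 k - c ord0 k).
  by apply: funext => y; rewrite !mxE.
apply: measurable_realfun.measurable_funB; last exact: measurable_cst.
by apply: continuous_measurable_rV; exact: coord_continuous.
Qed.

Lemma measurable_enormB (c : 'rV[R]_d) :
  measurable_fun (setT : set (Rd R d)) (fun y : 'rV[R]_d => enorm (y - c)).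
Proof.
apply: measurableT_comp.
  by apply: continuous_measurable_fun; exact: sqrt_continuous.
by apply: measurable_sum => k; apply: measurable_realfun.measurable_funX; exact: measurable_coordB.
Qed.

Lemma measurable_linf_ball (c : 'rV[R]_d) (r : R) :
  measurable (linf_ball c r : set (Rd R d)).
Proof.
have -> : linf_ball c r = \bigcap_(k in [set: 'I_d])
    (setT `&` (fun y : Rd R d => `|(y - c) ord0 k|) @^-1` `]-oo, r]).
  apply/seteqP; split => y /=.
    by move=> yB k _; split => //=; rewrite in_itv /= !mxE yB.
  by move=> yB k; have [_ /=] := yB k I; rewrite in_itv /= !mxE.
apply: fin_bigcap_measurable; first exact: finite_finset.
by move=> k _; exact: (measurableT_comp (@normr_measurable R setT) (measurable_coordB c k)).
Qed.

End measurability.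

Section integration.
Variables (dT : measure_display) (T : measurableType dT) (R : realType).
Variable mu : {measure set T -> \bar R}.
Implicit Types (f h : T -> R) (M : R).

Lemma integrable_dominated h f M : measurable_fun setT h ->
  mu.-integrable setT (EFin \o f) -> (forall y, `|h y| <= M * f y) ->
  mu.-integrable setT (EFin \o h).
Proof.
move=> mh fi hM.
apply: (@le_integrable _ _ _ mu _ measurableT _ (fun y => M%:E * (EFin \o f) y)%E).
- exact/measurable_EFinP.
- by move=> y _; rewrite lee_fin (le_trans (hM y)) // ler_norm.
- exact: integrableZl.
Qed.

Lemma integrableZl_fun f (c : R) : mu.-integrable setT (EFin \o f) ->
  mu.-integrable setT (EFin \o (fun y => c * f y)).
Proof. exact: integrableZl. Qed.

Lemma integrableD_fun f h : mu.-integrable setT (EFin \o f) ->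
  mu.-integrable setT (EFin \o h) -> mu.-integrable setT (EFin \o (fun y => f y + h y)).
Proof. exact: integrableD. Qed.

Lemma integrable_sumr (I : Type) (s : seq I) (h : I -> T -> R) :
  (forall i, mu.-integrable setT (EFin \o h i)) ->
  mu.-integrable setT (EFin \o (fun y => \sum_(i <- s) h i y)).
Proof.
move=> hi.
have -> : EFin \o (fun y => \sum_(i <- s) h i y) = (fun y => \sum_(i <- s) (h i y)%:E)%E.
  by apply: funext => y; rewrite /= sumEFin.
by apply: integrable_sum => // i _; exact: hi.
Qed.

Lemma Rintegral_sum (I : Type) (s : seq I) (h : I -> T -> R) :
  (forall i, mu.-integrable setT (EFin \o h i)) ->
  Rintegral mu setT (fun y => \sum_(i <- s) h i y)
  = \sum_(i <- s) Rintegral mu setT (h i).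
Proof.
move=> hi; elim: s => [|i s IH].
  by under eq_fun do rewrite big_nil; rewrite big_nil Rintegral_cst // mul0r.
under eq_fun do rewrite big_cons.
by rewrite big_cons RintegralD // ?IH //; exact: integrable_sumr.
Qed.

End integration.

Section finite_measure.
Variables (dT : measure_display) (T : measurableType dT) (R : realType).
Variable mu : {finite_measure set T -> \bar R}.

Lemma integrable_bounded (h : T -> R) (M : R) : measurable_fun setT h ->
  (forall y, `|h y| <= M) -> mu.-integrable setT (EFin \o h).
Proof.
move=> mh hM; apply: (@le_integrable _ _ _ mu _ measurableT _ (EFin \o cst M)).
- exact/measurable_EFinP.
- by move=> y _; rewrite lee_fin (le_trans (hM y)) // ler_norm.
- exact: finite_measure_integrable_cst.
Qed.

Lemma fine_measure_gt0 (B : set T) :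
  measurable B -> (0 < mu B)%E -> 0 < fine (mu B).
Proof.
by move=> mB muB0; rewrite fine_gt0 // muB0 /= ltey_eq fin_num_measure.
Qed.

Lemma mul_measure_le_Rintegral (w : T -> R) (B : set T) (e : R) :
  measurable B -> mu.-integrable setT (EFin \o w) -> (forall y, 0 <= w y) ->
  (forall y, B y -> e <= w y) -> e * fine (mu B) <= Rintegral mu setT w.
Proof.
move=> mB iw w0 we.
have -> : fine (mu B) = Rintegral mu setT (\1_B : T -> R).
  by rewrite /Rintegral integral_indic // setIT.
rewrite -RintegralZl //; last exact: integrable_indic.
apply: le_Rintegral => //; first exact/integrableZl_fun/integrable_indic.
move=> y _; rewrite /indic; case: (boolP (y \in B)) => [/set_mem/we|_].
  by rewrite mulr1.
by rewrite mulr0.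
Qed.

End finite_measure.

Section weighted_mean.
Variables (R : realType) (d : nat) (mu : {measure set (Rd R d) -> \bar R}).

Definition wmean (w : Rd R d -> R) : 'rV[R]_d :=
  \row_(k < d) (Rintegral mu setT (fun y : Rd R d => y ord0 k * w y)
                / Rintegral mu setT w).

Variable w : Rd R d -> R.
Hypothesis w_ge0 : forall y, 0 <= w y.
Hypothesis w_integrable : mu.-integrable setT (EFin \o w).

(* No positivity of [int w] is needed: if it vanishes, [wmean w] is the junk
   value 0 and both sides are trivial. *)
Lemma enorm_sub_wmean_le (c : 'rV[R]_d) :
  mu.-integrable setT (EFin \o (fun y : 'rV[R]_d => enorm (y - c) * w y)) ->
  enorm (c - wmean w) * Rintegral mu setT w
  <= Rintegral mu setT (fun y : 'rV[R]_d => enorm (y - c) * w y).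
Proof.
move=> fw_int; set Z := Rintegral mu setT w; set Fw := Rintegral mu setT _.
have Fw0 : 0 <= Fw by apply: Rintegral_ge0 => y _; rewrite mulr_ge0 ?enorm_ge0.
have [Z0|Z0] := eqVneq Z 0; first by rewrite Z0 mulr0.
have mw : measurable_fun setT w by case/integrableP: w_integrable => /measurable_EFinP.
pose g k (y : Rd R d) := (y - c) ord0 k * w y.
have g_int k : mu.-integrable setT (EFin \o g k).
  apply: (@integrable_dominated _ _ _ mu _ _ 1 _ fw_int).
    exact: measurable_funM (measurable_coordB c k) mw.
  move=> y; rewrite mul1r /g normrM (ger0_norm (w_ge0 y)).
  by rewrite ler_wpM2r ?normr_coord_le_enorm.
set v := c - wmean w.
have vE k : v ord0 k = - (Rintegral mu setT (g k) / Z).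
  rewrite !mxE.
  have -> : Rintegral mu setT (fun y : Rd R d => y ord0 k * w y)
      = Rintegral mu setT (g k) + c ord0 k * Z.
    rewrite -RintegralZl // -RintegralD //; [|exact: g_int|exact: integrableZl_fun].
    by apply: eq_Rintegral => y _; rewrite /g !mxE; ring.
  by rewrite -/Z; field.
have sqr_le : Z * enorm v ^+ 2 <= enorm v * Fw.
  have -> : Z * enorm v ^+ 2
      = Rintegral mu setT (fun y => \sum_(k < d) - v ord0 k * g k y).
    rewrite Rintegral_sum => [|k]; last exact: integrableZl_fun.
    rewrite sqr_enorm mulr_sumr; apply: eq_bigr => k _.
    by rewrite RintegralZl // vE; field.
  rewrite -RintegralZl //; apply: le_Rintegral => //.
  - by apply: integrable_sumr => k; exact: integrableZl_fun.
  - exact: integrableZl_fun.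
  move=> y _; rewrite /g mulrA; under eq_bigr do rewrite mulrA.
  rewrite -mulr_suml ler_wpM2r //; under eq_bigr do rewrite mulNr.
  by rewrite sumrN lerNl (lerNnormlW (cauchy_schwarz _ _)).
have [v0|v0] := eqVneq (enorm v) 0; first by rewrite v0 mul0r.
have vpos : 0 < enorm v by rewrite lt_def v0 enorm_ge0.
by move: sqr_le; rewrite expr2 mulrA (mulrC Z) -mulrA ler_pM2l // mulrC.
Qed.

End weighted_mean.

Lemma mul_le_threshold (R : realDomainType) (a b t e : R) :
  0 <= a -> 0 <= b -> 0 <= t -> 0 <= e -> (t < a -> b <= e) ->
  a * b <= t * b + e * a.
Proof.
move=> a0 b0 t0 e0 be; have [le_at|lt_ta] := leP a t.
  by rewrite ler_wpDr ?mulr_ge0 // ler_wpM2r.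
by rewrite ler_wpDl ?mulr_ge0 // mulrC ler_wpM2r // be.
Qed.

Section energy.
Variables (R : realType) (d : nat) (E : 'rV[R]_d -> 'rV[R]_d -> R).
Variables (ybar : 'rV[R]_d -> 'rV[R]_d) (CEl CEu : R).
Hypothesis E_bounded : forall x y, CEl <= E x y <= CEu.
Hypothesis E_le_max : forall x y, E x y <= E x (ybar x).

Lemma le_supEr r x y : 0 <= r -> linf_ball (ybar x) r y ->
  `|E x y - E x (ybar x)| <= supEr E ybar r.
Proof.
move=> r0 yB.
have gap_le z y' : `|E z y' - E z (ybar z)| <= CEu - CEl.
  have /andP[? ?] := E_bounded z y'; have /andP[? ?] := E_bounded z (ybar z).
  rewrite ler_norml; apply/andP; split; lra.
have Er_le z : Er E ybar r z <= CEu - CEl.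
  apply: ge_sup; last by move=> _ [y' _ <-]; exact: gap_le.
  by exists 0, (ybar z) => [k|]; rewrite subrr ?normr0.
apply: le_trans (_ : Er E ybar r x <= _).
  by apply: ub_le_sup; [exists (CEu - CEl) => _ [y' _ <-]; exact: gap_le | exists y].
by apply: ub_le_sup; [exists (CEu - CEl) => _ [z _ <-]; exact: Er_le | exists x].
Qed.

Lemma E_ge_on_ball r q x y : 0 <= r -> supEr E ybar r <= q ->
  linf_ball (ybar x) r y -> E x (ybar x) - q <= E x y.
Proof.
move=> r0 supq /(le_supEr r0) /le_trans /(_ supq).
by rewrite ler_norml => /andP[? _]; lra.
Qed.

Variables (Einf eta nu R0 : R).
Hypothesis eta_gt0 : 0 < eta.
Hypothesis nu_ge0 : 0 <= nu.
Hypothesis E_growth : forall x y, linf_ball (ybar x) R0 y ->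
  eta * enorm (y - ybar x) <= `|E x y - E x (ybar x)| `^ nu.
Hypothesis E_gap : forall x y, ~ linf_ball (ybar x) R0 y ->
  Einf < E x (ybar x) - E x y.

Lemma E_lt_far q x y : 0 <= q -> 2 * q <= Einf ->
  (2 * q) `^ nu / eta < enorm (y - ybar x) -> E x y < E x (ybar x) - 2 * q.
Proof.
move=> q0 qEinf far; rewrite ltNge; apply/negP => near.
have y_R0 : linf_ball (ybar x) R0 y.
  by apply: contrapT => /E_gap; lra.
have := E_growth y_R0; apply/negP; rewrite -ltNge.
apply: le_lt_trans (_ : (2 * q) `^ nu < _); last by rewrite -ltr_pdivrMl // mulrC.
apply: ge0_ler_powR; rewrite ?nnegrE //; first lra.
by rewrite distrC ger0_norm ?subr_ge0 ?E_le_max //; lra.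
Qed.

Hypothesis E_continuous : forall x, continuous (E x).

Section Gibbs_weight.
Variables (P : probability (Rd R d) R) (beta : R) (x : 'rV[R]_d).
Hypothesis beta_gt0 : 0 < beta.

Let w (y : Rd R d) := expR (beta * E x y).

Let w_le y : w y <= expR (beta * CEu).
Proof. by rewrite ler_expR ler_pM2l //; case/andP: (E_bounded x y). Qed.

Let measurable_w : measurable_fun setT w.
Proof.
apply: measurableT_comp.
  by apply: continuous_measurable_fun; exact: continuous_expR.
apply: measurable_funM (measurable_cst beta) _.
exact: continuous_measurable_rV.
Qed.

Lemma integrable_Gibbs_weight : P.-integrable setT (EFin \o w).
Proof.
apply: (@integrable_bounded _ _ _ P _ _ measurable_w) => y.
by rewrite ger0_norm ?expR_ge0 ?w_le.
Qed.

Lemma integrable_mul_Gibbs_weight (c : 'rV[R]_d) :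
  P.-integrable setT (EFin \o (fun y : 'rV[R]_d => enorm (y - c))) ->
  P.-integrable setT (EFin \o (fun y : 'rV[R]_d => enorm (y - c) * w y)).
Proof.
move=> f_int; apply: (@integrable_dominated _ _ _ P _ _ _ _ f_int).
  exact: measurable_funM (measurable_enormB _) measurable_w.
move=> y; rewrite normrM !ger0_norm ?enorm_ge0 ?expR_ge0 //.
by rewrite mulrC ler_wpM2r ?enorm_ge0 ?w_le.
Qed.

End Gibbs_weight.

Lemma enorm_ybar_sub_Ybeta_le (P : probability (Rd R d) R) beta q r x :
  0 < beta -> 0 <= q -> 2 * q <= Einf -> 0 <= r -> supEr E ybar r <= q ->
  (0 < P (linf_ball (ybar x) r))%E ->
  P.-integrable setT (EFin \o (fun y : 'rV[R]_d => enorm (y - ybar x))) ->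
  enorm (ybar x - Ybeta E beta P x)
  <= (2 * q) `^ nu / eta + expR (- (beta * q)) / fine (P (linf_ball (ybar x) r))
     * Rintegral P setT (fun y : 'rV[R]_d => enorm (y - ybar x)).
Proof.
move=> beta0 q0 qEinf r0 supq PB0 f_int.
set PB := fine _; set If := Rintegral _ _ _; set rt := _ / eta; set a := expR _.
pose w y := expR (beta * E x y); pose Z := Rintegral P setT w.
pose e1 := expR (beta * (E x (ybar x) - q)).
have w_ge0 y : 0 <= w y by exact: expR_ge0.
have w_int : P.-integrable setT (EFin \o w) by exact: integrable_Gibbs_weight.
have fw_int : P.-integrable setT (EFin \o (fun y => enorm (y - ybar x) * w y)).
  exact: integrable_mul_Gibbs_weight.
have rt_ge0 : 0 <= rt by rewrite divr_ge0 ?powR_ge0 // ltW.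
have e1_gt0 : 0 < e1 by exact: expR_gt0.
have PB_gt0 : 0 < PB by exact: fine_measure_gt0 (measurable_linf_ball _ _) PB0.
have Z_ge : e1 * PB <= Z.
  apply: mul_measure_le_Rintegral => //; first exact: measurable_linf_ball.
  by move=> y /(E_ge_on_ball r0 supq); rewrite ler_expR ler_pM2l.
have Fw_le : Rintegral P setT (fun y => enorm (y - ybar x) * w y) <= rt * Z + a * e1 * If.
  rewrite -!RintegralZl // -RintegralD //; try exact: integrableZl_fun.
  apply: le_Rintegral => //; first by apply: integrableD_fun; exact: integrableZl_fun.
  move=> y _; apply: mul_le_threshold (enorm_ge0 _) (w_ge0 y) rt_ge0 _ _.
    by rewrite mulr_ge0 ?expR_ge0.
  move=> /(E_lt_far q0 qEinf) far; rewrite /a /e1 -expRD ler_expR.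
  have -> : - (beta * q) + beta * (E x (ybar x) - q) = beta * (E x (ybar x) - 2 * q).
    by ring.
  by rewrite ler_pM2l // ltW.
have := enorm_sub_wmean_le w_ge0 w_int fw_int; rewrite -/Z => dev_le.
set en := enorm _ in dev_le *.
have [le_rt|lt_rt] := leP en rt.
  have If_ge0 : 0 <= If by apply: Rintegral_ge0 => y _; exact: enorm_ge0.
  by rewrite ler_wpDr // mulr_ge0 // divr_ge0 ?expR_ge0 // ltW.
rewrite -lerBlDl mulrAC ler_pdivlMr // -(ler_pM2l e1_gt0).
apply: le_trans (_ : (en - rt) * Z <= _).
  by rewrite mulrCA ler_pM2l ?subr_gt0.
by rewrite mulrA (mulrC e1) mulrBl; lra.
Qed.

End energy.

Unset Implicit Arguments.

Theorem proposition3p2 (R : realType) (d : nat)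
    (E : 'rV[R]_d -> 'rV[R]_d -> R)
    (CEl CEu LE c1 c2 Einf eta nu R0 : R)
    (ybar : 'rV[R]_d -> 'rV[R]_d) (xstar : 'rV[R]_d)
    (lam sig alpha beta : R)
    (rhoY : R -> probability (Rd R d) R)
    (q r : R) :
  continuous (fun p : 'rV[R]_d * 'rV[R]_d => E p.1 p.2) ->
  (* (i) *)
  (forall x y, CEl <= E x y <= CEu) ->
  (* (ii) *)
  (forall x1 x2 y1 y2, `|E x1 y1 - E x2 y2|
     <= LE * (1 + enorm x1 + enorm x2 + enorm y1 + enorm y2)
           * (enorm (x1 - x2) + enorm (y1 - y2))) ->
  (* (iii): ybar x is the unique argmax of E(x, .) *)
  (forall x y, E x y <= E x (ybar x)) ->
  (forall x y, E x y = E x (ybar x) -> y = ybar x) ->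
  (* x* = argmin of Ebar(x) = E(x, ybar x) (unique), y* = ybar x* *)
  (forall x, E xstar (ybar xstar) <= E x (ybar x)) ->
  (forall x, E x (ybar x) = E xstar (ybar xstar) -> x = xstar) ->
  (forall x1 x2, enorm (ybar x1 - ybar x2) <= c1 * enorm (x1 - x2)) ->
  (forall x, enorm (ybar x) <= c2) ->
  (* (iv) *)
  0 < Einf -> 0 < eta -> 0 < nu -> 0 < R0 ->
  (forall x y, linf_ball (ybar x) R0 y ->
     eta * enorm (y - ybar x) <= (`|E x y - E x (ybar x)|) `^ nu) ->
  (forall x y, ~ linf_ball (ybar x) R0 y ->
     Einf < E x (ybar x) - E x y) ->
  (* (v) *)
  (forall q', 0 < q' -> exists r', 0 < r' <= R0 /\
     forall x y, linf_ball (ybar x) r' y -> `|E x y - E x (ybar x)| <= q') ->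
  (* parameters of (MF) *)
  0 < lam -> 0 < sig -> 0 < alpha -> 0 < beta ->
  (* rhoY t : law of Ybar_t, finite fourth moments on bounded time intervals *)
  (forall T, 0 < T -> exists M : R, forall t, 0 <= t <= T ->
     (\int[rhoY t]_y ((enorm (y : 'rV[R]_d)) ^+ 4)%:E <= M%:E)%E) ->
  0 < q -> q <= Einf / 2 ->
  (* r = max { s in (0, R0] : sup_x E_s(x) <= q } *)
  0 < r <= R0 -> supEr E ybar r <= q ->
  (forall s, 0 < s <= R0 -> supEr E ybar s <= q -> s <= r) ->
  forall (t : R) (x : 'rV[R]_d), 0 < t ->
  (0 < rhoY t (linf_ball (ybar x) r : set (Rd R d)))%E ->
  ((enorm (ybar x - Ybeta E beta (rhoY t) x))%:E
   <= ((2 * q) `^ nu / eta)%:E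
      + (expR (- (beta * q)) / fine (rhoY t (linf_ball (ybar x) r : set (Rd R d))))%:E
        * \int[rhoY t]_y (enorm ((y : 'rV[R]_d) - ybar x))%:E)%E.

Proof.
move=> cE E_bounded _ E_le_max _ _ _ _ _ _ eta_gt0 nu_gt0 _ E_growth E_gap _ _ _ _ beta_gt0
  _ q_gt0 q_le /andP[r_gt0 _] supq _ t x _ PB_gt0.
set P := rhoY t; set f := fun y : 'rV[R]_d => enorm (y - ybar x).
have [f_infty|f_fin] := eqVneq (\int[P]_y (f y)%:E)%E +oo%E.
  rewrite f_infty mulry gtr0_sg ?mul1e ?addey ?leey // divr_gt0 ?expR_gt0 //.
  exact: fine_measure_gt0 (measurable_linf_ball _ _) PB_gt0.
have f_int : P.-integrable setT (EFin \o f).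
  apply/integrableP; split; first by apply/measurable_EFinP; exact: measurable_enormB.
  under eq_integral do rewrite /= ger0_norm ?enorm_ge0 //.
  by rewrite ltey.
have -> : (\int[P]_y (f y)%:E)%E = (Rintegral P setT f)%:E.
  by rewrite fineK // ge0_fin_numE ?ltey // integral_ge0 // => y _; rewrite lee_fin enorm_ge0.
rewrite -EFinM -EFinD lee_fin.
apply: (enorm_ybar_sub_Ybeta_le E_bounded E_le_max eta_gt0 (ltW nu_gt0) E_growth E_gap
  (continuous_curry cE).2) => //; [exact: ltW | lra | exact: ltW].
Qed.
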